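(* Let $\xi:[a,b]\to\mathbb{R}^3$ be as in the context with $k>0$, $\tau\neq0$ and $\sigma\neq0$ on $[a,b]$, and let $e$ be its evolute. Then $$\int_a^b k_e\,\|e'\|\,dt=\int_a^b|\tau|\,dt,\qquad \int_a^b \tau_e\,\|e'\|\,dt=\int_a^b \operatorname{sgn}(\sigma)\,k\,dt .$$ That is, the total curvature of the evolute equals the total absolute torsion of $\xi$, and the total torsion of the evolute equals the total curvature of $\xi$ taken with the sign of $\sigma$.
   Context: $\xi$ is a smooth arclength-parametrized space curve with curvature $k>0$, $r=1/k$, torsion $\tau$ and Frenet frame $(\mathbf{t},\mathbf{n},\mathbf{b})$. Its evolute is $e=\xi+r\mathbf{n}+\frac{r'}{\tau}\mathbf{b}$, and $\sigma=r\tau+\left(\frac{r'}{\tau}\right)'$. Here $k_e,\tau_e$ denote the curvature and torsion of $e$ at $e(t)$. *)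

From Stdlib Require Import Reals.
From Coquelicot Require Import Coquelicot.
Open Scope R_scope.

Definition vec : Type := (R * R * R)%type.
Definition vx (v : vec) : R := fst (fst v).
Definition vy (v : vec) : R := snd (fst v).
Definition vz (v : vec) : R := snd v.
Definition mkv (x y z : R) : vec := (x, y, z).

Definition vadd (u v : vec) : vec := mkv (vx u + vx v) (vy u + vy v) (vz u + vz v).
Definition vscale (c : R) (v : vec) : vec := mkv (c * vx v) (c * vy v) (c * vz v).
Definition dot (u v : vec) : R := vx u * vx v + vy u * vy v + vz u * vz v.
Definition cross (u v : vec) : vec :=
  mkv (vy u * vz v - vz u * vy v) (vz u * vx v - vx u * vz v) (vx u * vy v - vy u * vx v).
Definition vnorm (v : vec) : R := sqrt (dot v v).
Definition det3 (u v w : vec) : R := dot u (cross v w).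

Definition vderive (f : R -> vec) (t : R) : vec :=
  mkv (Derive (fun s => vx (f s)) t) (Derive (fun s => vy (f s)) t)
      (Derive (fun s => vz (f s)) t).

Definition smooth_on (c d : R) (f : R -> vec) : Prop :=
  forall (n : nat) (t : R), c < t < d ->
    ex_derive_n (fun s => vx (f s)) n t /\
    ex_derive_n (fun s => vy (f s)) n t /\
    ex_derive_n (fun s => vz (f s)) n t.

(* Frenet apparatus of an arclength-parametrized curve xi *)
Definition tangent (xi : R -> vec) (t : R) : vec := vderive xi t.
Definition curvature (xi : R -> vec) (t : R) : R := vnorm (vderive (vderive xi) t).
Definition radius (xi : R -> vec) (t : R) : R := / curvature xi t.
Definition normal (xi : R -> vec) (t : R) : vec :=
  vscale (/ curvature xi t) (vderive (vderive xi) t).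
Definition binormal (xi : R -> vec) (t : R) : vec := cross (tangent xi t) (normal xi t).
(* Frenet: n' = - k t + tau b *)
Definition torsion (xi : R -> vec) (t : R) : R :=
  dot (vderive (normal xi) t) (binormal xi t).

Definition evolute (xi : R -> vec) (t : R) : vec :=
  vadd (xi t) (vadd (vscale (radius xi t) (normal xi t))
                    (vscale (Derive (radius xi) t / torsion xi t) (binormal xi t))).

Definition sigma_fn (xi : R -> vec) (t : R) : R :=
  radius xi t * torsion xi t + Derive (fun s => Derive (radius xi) s / torsion xi s) t.

Definition gen_curvature (e : R -> vec) (t : R) : R :=
  vnorm (cross (vderive e t) (vderive (vderive e) t)) / (vnorm (vderive e t)) ^ 3.
Definition gen_torsion (e : R -> vec) (t : R) : R :=
  det3 (vderive e t) (vderive (vderive e) t) (vderive (vderive (vderive e)) t)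
  / (vnorm (cross (vderive e t) (vderive (vderive e) t))) ^ 2.

Definition sgn (x : R) : R :=
  if Rlt_dec 0 x then 1 else if Rlt_dec x 0 then -1 else 0.

From Stdlib Require Import Reals Lra.
From Coquelicot Require Import Coquelicot.
Open Scope R_scope.

(* By the Frenet formulas, e' = sigma b and e'' = sigma' b - sigma tau n, so
   e' x e'' = sigma^2 tau t; differentiating t . e'' = 0 gives t . e''' = sigma tau k.
   Hence k_e |e'| = sigma^2 |tau| |sigma| / |sigma|^3 = |tau| and
   tau_e |e'| = sigma^3 tau^2 k |sigma| / (sigma^2 tau)^2 = sgn(sigma) k at every point
   of (a, b), so the integrands agree. *)

Section SmoothIn.
Variables a b : R.

Lemma locally_eq_in (f g : R -> R) t : a < t < b ->
  (forall s, a < s < b -> f s = g s) -> locally t (fun s => f s = g s).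
Proof.
  intros Ht E. eapply filter_imp; [intros s Hs; exact (E s Hs)|].
  exact (open_and _ _ (open_gt a) (open_lt b) t Ht).
Qed.

Lemma is_derive_const_in (f : R -> R) C t l : (forall s, a < s < b -> f s = C) ->
  a < t < b -> is_derive f t l -> l = 0.
Proof.
  intros E Ht H.
  apply is_derive_ext_loc with (g := fun _ => C) in H; [|exact (locally_eq_in f _ t Ht E)].
  rewrite <- (is_derive_unique _ _ _ H). exact (Derive_const C t).
Qed.

Fixpoint derivable_upto (k : nat) (f : R -> R) : Prop :=
  match k with
  | O => True
  | S k => (forall t, a < t < b -> ex_derive f t) /\ derivable_upto k (Derive f)
  end.

Lemma derivable_upto_ext k : forall f g, (forall s, a < s < b -> f s = g s) ->
  derivable_upto k f -> derivable_upto k g.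
Proof.
  induction k as [|k IHk]; simpl; auto. intros f g E [Df Hf]. split.
  - intros t Ht. exact (ex_derive_ext_loc f g t (locally_eq_in f g t Ht E) (Df t Ht)).
  - apply IHk with (Derive f); auto.
    intros s Hs. exact (Derive_ext_loc f g s (locally_eq_in f g s Hs E)).
Qed.

Lemma derivable_upto_pred k f : derivable_upto (S k) f -> derivable_upto k f.
Proof.
  revert f. induction k as [|k IHk]; simpl; auto. intros f [Df Hf]. split; auto.
Qed.

Lemma derivable_upto_const k : forall c, derivable_upto k (fun _ => c).
Proof.
  induction k as [|k IHk]; simpl; auto. intros c. split.
  - intros t _. apply ex_derive_const.
  - apply derivable_upto_ext with (fun _ => 0); auto.
    intros s _. symmetry. apply Derive_const.
Qed.

Lemma derivable_upto_plus k : forall f g, derivable_upto k f -> derivable_upto k g ->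
  derivable_upto k (fun s => f s + g s).
Proof.
  induction k as [|k IHk]; simpl; auto. intros f g [Df Hf] [Dg Hg]. split.
  - intros t Ht. exact (ex_derive_plus f g t (Df t Ht) (Dg t Ht)).
  - apply derivable_upto_ext with (fun s => Derive f s + Derive g s); auto.
    intros s Hs. symmetry. exact (Derive_plus f g s (Df s Hs) (Dg s Hs)).
Qed.

Lemma derivable_upto_opp k : forall f, derivable_upto k f -> derivable_upto k (fun s => - f s).
Proof.
  induction k as [|k IHk]; simpl; auto. intros f [Df Hf]. split.
  - intros t Ht. exact (ex_derive_opp f t (Df t Ht)).
  - apply derivable_upto_ext with (fun s => - Derive f s); auto.
    intros s _. symmetry. apply Derive_opp.
Qed.

Lemma derivable_upto_mult k : forall f g, derivable_upto k f -> derivable_upto k g ->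
  derivable_upto k (fun s => f s * g s).
Proof.
  induction k as [|k IHk]; auto. intros f g F G.
  pose proof (derivable_upto_pred _ _ F) as F'. pose proof (derivable_upto_pred _ _ G) as G'.
  destruct F as [Df Hf], G as [Dg Hg]. split.
  - intros t Ht. exact (ex_derive_mult f g t (Df t Ht) (Dg t Ht)).
  - apply derivable_upto_ext with (fun s => Derive f s * g s + f s * Derive g s).
    + intros s Hs. symmetry. exact (Derive_mult f g s (Df s Hs) (Dg s Hs)).
    + apply derivable_upto_plus; apply IHk; auto.
Qed.

Lemma derivable_upto_inv k : forall f, (forall s, a < s < b -> f s <> 0) ->
  derivable_upto k f -> derivable_upto k (fun s => / f s).
Proof.
  induction k as [|k IHk]; auto. intros f Hf0 F.
  pose proof (derivable_upto_pred _ _ F) as F'. destruct F as [Df Hf]. split.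
  - intros t Ht. exact (ex_derive_inv f t (Df t Ht) (Hf0 t Ht)).
  - apply derivable_upto_ext with (fun s => - Derive f s * (/ f s * / f s)).
    + intros s Hs. rewrite (Derive_inv f s (Df s Hs) (Hf0 s Hs)). field. auto.
    + apply derivable_upto_mult; [apply derivable_upto_opp; auto|].
      apply derivable_upto_mult; apply IHk; auto.
Qed.

Lemma derivable_upto_sqrt k : forall f, (forall s, a < s < b -> 0 < f s) ->
  derivable_upto k f -> derivable_upto k (fun s => sqrt (f s)).
Proof.
  induction k as [|k IHk]; auto. intros f Hf0 F.
  pose proof (derivable_upto_pred _ _ F) as F'. destruct F as [Df Hf].
  assert (Hsqrt : forall s, a < s < b ->
    is_derive (fun s => sqrt (f s)) s (Derive f s * / (2 * sqrt (f s)))).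
  { intros s Hs. exact (is_derive_sqrt f s _ (Derive_correct f s (Df s Hs)) (Hf0 s Hs)). }
  split.
  - intros t Ht. eexists. exact (Hsqrt t Ht).
  - apply derivable_upto_ext with (fun s => Derive f s * / (2 * sqrt (f s))).
    + intros s Hs. symmetry. exact (is_derive_unique _ _ _ (Hsqrt s Hs)).
    + apply derivable_upto_mult; auto. apply derivable_upto_inv.
      * intros s Hs. pose proof (sqrt_lt_R0 _ (Hf0 s Hs)). lra.
      * apply derivable_upto_mult; [apply derivable_upto_const | apply IHk; auto].
Qed.

Lemma derivable_upto_Derive_n f : (forall n t, a < t < b -> ex_derive_n f n t) ->
  forall k m, derivable_upto k (Derive_n f m).
Proof.
  intros H k. induction k as [|k IHk]; simpl; auto. intros m. split.
  - intros t Ht. exact (H (S m) t Ht).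
  - exact (IHk (S m)).
Qed.

Definition smooth_in (f : R -> R) : Prop := forall k, derivable_upto k f.

Lemma smooth_in_of_ex_derive_n f : (forall n t, a < t < b -> ex_derive_n f n t) ->
  smooth_in f.
Proof. intros H k. exact (derivable_upto_Derive_n f H k O). Qed.
Lemma smooth_in_Derive f : smooth_in f -> smooth_in (Derive f).
Proof. intros F k. exact (proj2 (F (S k))). Qed.
Lemma smooth_in_is_derive f t : smooth_in f -> a < t < b -> is_derive f t (Derive f t).
Proof. intros F Ht. exact (Derive_correct f t (proj1 (F 1%nat) t Ht)). Qed.
Lemma smooth_in_plus f g : smooth_in f -> smooth_in g -> smooth_in (fun s => f s + g s).
Proof. intros F G k. apply derivable_upto_plus; auto. Qed.
Lemma smooth_in_opp f : smooth_in f -> smooth_in (fun s => - f s).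
Proof. intros F k. apply derivable_upto_opp; auto. Qed.
Lemma smooth_in_minus f g : smooth_in f -> smooth_in g -> smooth_in (fun s => f s - g s).
Proof. intros F G. apply smooth_in_plus; [|apply smooth_in_opp]; auto. Qed.
Lemma smooth_in_mult f g : smooth_in f -> smooth_in g -> smooth_in (fun s => f s * g s).
Proof. intros F G k. apply derivable_upto_mult; auto. Qed.
Lemma smooth_in_inv f : (forall s, a < s < b -> f s <> 0) -> smooth_in f ->
  smooth_in (fun s => / f s).
Proof. intros H F k. apply derivable_upto_inv; auto. Qed.
Lemma smooth_in_div f g : (forall s, a < s < b -> g s <> 0) -> smooth_in f -> smooth_in g ->
  smooth_in (fun s => f s / g s).
Proof. intros H F G. apply smooth_in_mult; [|apply smooth_in_inv]; auto. Qed.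
Lemma smooth_in_sqrt f : (forall s, a < s < b -> 0 < f s) -> smooth_in f ->
  smooth_in (fun s => sqrt (f s)).
Proof. intros H F k. apply derivable_upto_sqrt; auto. Qed.
End SmoothIn.

Lemma vec_ext (u v : vec) : vx u = vx v -> vy u = vy v -> vz u = vz v -> u = v.
Proof.
  destruct u as [[u1 u2] u3], v as [[v1 v2] v3]; unfold vx, vy, vz; simpl.
  intros -> -> ->. reflexivity.
Qed.

Ltac vec_unfold := unfold det3, dot, cross, vscale, vadd, mkv, vx, vy, vz; cbn [fst snd].
Ltac vec_ring := apply vec_ext; vec_unfold; ring.

Lemma dot_comm u v : dot u v = dot v u.
Proof. vec_unfold; ring. Qed.
Lemma dot_vscale_l c u v : dot (vscale c u) v = c * dot u v.
Proof. vec_unfold; ring. Qed.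
Lemma dot_vscale_r c u v : dot u (vscale c v) = c * dot u v.
Proof. vec_unfold; ring. Qed.
Lemma dot_vadd_r u v w : dot u (vadd v w) = dot u v + dot u w.
Proof. vec_unfold; ring. Qed.
Lemma dot_self_ge0 v : 0 <= dot v v.
Proof. vec_unfold; nra. Qed.
Lemma dot_cross_l u v : dot u (cross u v) = 0.
Proof. vec_unfold; ring. Qed.
Lemma dot_cross_r u v : dot v (cross u v) = 0.
Proof. vec_unfold; ring. Qed.
Lemma dot_cross_cross u v : dot (cross u v) (cross u v) = dot u u * dot v v - dot u v ^ 2.
Proof. vec_unfold; ring. Qed.
Lemma cross_cross u v w : cross u (cross v w) = vadd (vscale (dot u w) v) (vscale (- dot u v) w).
Proof. vec_ring. Qed.
Lemma cross_cross_l u v w : cross (cross u v) w = vadd (vscale (dot u w) v) (vscale (- dot v w) u).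
Proof. vec_ring. Qed.
Lemma det3E u v w : det3 u v w = dot (cross u v) w.
Proof. vec_unfold; ring. Qed.
Lemma vscale_det3 u v w x : vscale (det3 u v w) x =
  vadd (vscale (dot x u) (cross v w)) (vadd (vscale (dot x v) (cross w u)) (vscale (dot x w) (cross u v))).
Proof. vec_ring. Qed.

Lemma vnorm_vscale c v : vnorm (vscale c v) = Rabs c * vnorm v.
Proof.
  unfold vnorm. rewrite dot_vscale_l, dot_vscale_r, <- Rmult_assoc.
  rewrite sqrt_mult by (nra || apply dot_self_ge0).
  rewrite <- sqrt_Rsqr_abs. reflexivity.
Qed.

Lemma vnorm_unit v : dot v v = 1 -> vnorm v = 1.
Proof. intros H. unfold vnorm. rewrite H. apply sqrt_1. Qed.

Definition orthonormal_frame (T N B : vec) : Prop :=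
  dot T T = 1 /\ dot N N = 1 /\ dot T N = 0 /\ B = cross T N.

Section OrthonormalFrame.
Variables T N B : vec.
Hypothesis frame : orthonormal_frame T N B.

Lemma frame_BB : dot B B = 1.
Proof. destruct frame as [TT [NN [TN ->]]]. rewrite dot_cross_cross, TT, NN, TN. ring. Qed.
Lemma frame_TB : dot T B = 0.
Proof. destruct frame as [_ [_ [_ ->]]]. apply dot_cross_l. Qed.
Lemma frame_NB : dot N B = 0.
Proof. destruct frame as [_ [_ [_ ->]]]. apply dot_cross_r. Qed.
Lemma frame_NxB : cross N B = T.
Proof.
  destruct frame as [_ [NN [TN ->]]]. rewrite cross_cross, NN, dot_comm, TN. vec_ring.
Qed.
Lemma frame_BxT : cross B T = N.
Proof.
  destruct frame as [TT [_ [TN ->]]]. rewrite cross_cross_l, TT, dot_comm, TN. vec_ring.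
Qed.

Lemma frame_decompose w :
  w = vadd (vscale (dot w T) T) (vadd (vscale (dot w N) N) (vscale (dot w B) B)).
Proof.
  assert (HTB : det3 T N B = 1) by (rewrite det3E; destruct frame as [TT [_ [_ <-]]]; exact frame_BB).
  pose proof (vscale_det3 T N B w) as E.
  rewrite HTB, frame_NxB, frame_BxT in E. destruct frame as [_ [_ [_ HB]]].
  rewrite <- HB in E. rewrite <- E. vec_ring.
Qed.
End OrthonormalFrame.

Definition is_vderive (F : R -> vec) (t : R) (v : vec) : Prop :=
  is_derive (fun s => vx (F s)) t (vx v) /\ is_derive (fun s => vy (F s)) t (vy v) /\
  is_derive (fun s => vz (F s)) t (vz v).

Lemma is_vderive_unique F t v : is_vderive F t v -> vderive F t = v.
Proof.
  intros [X [Y Z]]. apply vec_ext; unfold vderive, mkv, vx, vy, vz in *; simpl;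
  apply is_derive_unique; assumption.
Qed.

Lemma is_vderive_vadd F G t u v : is_vderive F t u -> is_vderive G t v ->
  is_vderive (fun s => vadd (F s) (G s)) t (vadd u v).
Proof.
  intros [X [Y Z]] [X' [Y' Z']].
  split; [|split]; [exact (is_derive_plus _ _ t _ _ X X') | exact (is_derive_plus _ _ t _ _ Y Y')
                  | exact (is_derive_plus _ _ t _ _ Z Z')].
Qed.

Lemma is_vderive_vscale (c : R -> R) F t c' v : is_derive c t c' -> is_vderive F t v ->
  is_vderive (fun s => vscale (c s) (F s)) t (vadd (vscale c' (F t)) (vscale (c t) v)).
Proof. intros C [X [Y Z]]. split; [|split]; apply Derive.is_derive_mult; assumption. Qed.

Lemma is_vderive_cross F G t u v : is_vderive F t u -> is_vderive G t v ->
  is_vderive (fun s => cross (F s) (G s)) t (vadd (cross u (G t)) (cross (F t) v)).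
Proof.
  intros [X [Y Z]] [X' [Y' Z']].
  assert (Hdet : forall f1 f2 g1 g2 : R -> R, forall df1 df2 dg1 dg2,
    is_derive f1 t df1 -> is_derive f2 t df2 -> is_derive g1 t dg1 -> is_derive g2 t dg2 ->
    is_derive (fun s => f1 s * g2 s - f2 s * g1 s) t
      ((df1 * g2 t + f1 t * dg2) - (df2 * g1 t + f2 t * dg1))).
  { intros f1 f2 g1 g2 df1 df2 dg1 dg2 F1 F2 G1 G2.
    exact (is_derive_minus _ _ t _ _ (Derive.is_derive_mult _ _ t _ _ F1 G2)
                                     (Derive.is_derive_mult _ _ t _ _ F2 G1)). }
  split; [|split]; match goal with |- is_derive _ _ ?l => set (d := l) end.
  - change (is_derive (fun s => vy (F s) * vz (G s) - vz (F s) * vy (G s)) t d).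
    replace d with ((vy u * vz (G t) + vy (F t) * vz v) - (vz u * vy (G t) + vz (F t) * vy v))
      by (unfold d; vec_unfold; ring).
    exact (Hdet _ _ _ _ _ _ _ _ Y Z Y' Z').
  - change (is_derive (fun s => vz (F s) * vx (G s) - vx (F s) * vz (G s)) t d).
    replace d with ((vz u * vx (G t) + vz (F t) * vx v) - (vx u * vz (G t) + vx (F t) * vz v))
      by (unfold d; vec_unfold; ring).
    exact (Hdet _ _ _ _ _ _ _ _ Z X Z' X').
  - change (is_derive (fun s => vx (F s) * vy (G s) - vy (F s) * vx (G s)) t d).
    replace d with ((vx u * vy (G t) + vx (F t) * vy v) - (vy u * vx (G t) + vy (F t) * vx v))
      by (unfold d; vec_unfold; ring).
    exact (Hdet _ _ _ _ _ _ _ _ X Y X' Y').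
Qed.

Lemma is_derive_dot F G t u v : is_vderive F t u -> is_vderive G t v ->
  is_derive (fun s => dot (F s) (G s)) t (dot u (G t) + dot (F t) v).
Proof.
  intros [X [Y Z]] [X' [Y' Z']].
  change (is_derive (fun s => vx (F s) * vx (G s) + vy (F s) * vy (G s) + vz (F s) * vz (G s))
    t (dot u (G t) + dot (F t) v)).
  replace (dot u (G t) + dot (F t) v) with
    ((vx u * vx (G t) + vx (F t) * vx v) + (vy u * vy (G t) + vy (F t) * vy v)
     + (vz u * vz (G t) + vz (F t) * vz v)) by (unfold dot; ring).
  exact (is_derive_plus _ _ t _ _
    (is_derive_plus _ _ t _ _ (Derive.is_derive_mult _ _ t _ _ X X')
                              (Derive.is_derive_mult _ _ t _ _ Y Y'))
    (Derive.is_derive_mult _ _ t _ _ Z Z')).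
Qed.

Section VSmoothIn.
Variables a b : R.

Definition vsmooth_in (F : R -> vec) : Prop :=
  smooth_in a b (fun s => vx (F s)) /\ smooth_in a b (fun s => vy (F s)) /\
  smooth_in a b (fun s => vz (F s)).

Lemma vsmooth_in_is_vderive F t : vsmooth_in F -> a < t < b -> is_vderive F t (vderive F t).
Proof. intros [X [Y Z]] Ht. split; [|split]; apply (smooth_in_is_derive a b); assumption. Qed.

Lemma vsmooth_in_vderive F : vsmooth_in F -> vsmooth_in (vderive F).
Proof. intros [X [Y Z]]. split; [|split]; apply smooth_in_Derive; assumption. Qed.

Lemma vderive_ext_in F G t : (forall s, a < s < b -> F s = G s) -> a < t < b ->
  vderive F t = vderive G t.
Proof.
  intros E Ht. unfold vderive. f_equal; apply Derive_ext_loc; apply (locally_eq_in a b); auto;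
  intros s Hs; rewrite E; auto.
Qed.

Lemma vsmooth_in_vadd F G : vsmooth_in F -> vsmooth_in G -> vsmooth_in (fun s => vadd (F s) (G s)).
Proof. intros [X [Y Z]] [X' [Y' Z']]. split; [|split]; apply smooth_in_plus; assumption. Qed.

Lemma vsmooth_in_vscale c F : smooth_in a b c -> vsmooth_in F ->
  vsmooth_in (fun s => vscale (c s) (F s)).
Proof. intros C [X [Y Z]]. split; [|split]; apply smooth_in_mult; assumption. Qed.

Lemma vsmooth_in_cross F G : vsmooth_in F -> vsmooth_in G -> vsmooth_in (fun s => cross (F s) (G s)).
Proof.
  intros [X [Y Z]] [X' [Y' Z']].
  split; [|split]; apply smooth_in_minus; apply smooth_in_mult; assumption.
Qed.

Lemma smooth_in_dot F G : vsmooth_in F -> vsmooth_in G -> smooth_in a b (fun s => dot (F s) (G s)).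
Proof.
  intros [X [Y Z]] [X' [Y' Z']]. unfold dot.
  repeat apply smooth_in_plus; apply smooth_in_mult; assumption.
Qed.
End VSmoothIn.

Lemma vsmooth_in_of_smooth_on (xi : R -> vec) a b c d : c <= a -> b <= d -> smooth_on c d xi ->
  vsmooth_in a b xi.
Proof.
  intros Hca Hbd H. split; [|split]; apply smooth_in_of_ex_derive_n; intros n t Ht;
    destruct (H n t ltac:(lra)) as [X [Y Z]]; assumption.
Qed.

Section Frenet.
Variables (xi : R -> vec) (a b : R).
Hypothesis xi_smooth : vsmooth_in a b xi.
Hypothesis unit_speed : forall s, a < s < b -> vnorm (vderive xi s) = 1.
Hypothesis curvature_gt0 : forall s, a < s < b -> 0 < curvature xi s.
Hypothesis torsion_neq0 : forall s, a < s < b -> torsion xi s <> 0.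
Hypothesis sigma_neq0 : forall s, a < s < b -> sigma_fn xi s <> 0.

Local Notation T := (vderive xi).
Local Notation K := (curvature xi).
Local Notation N := (normal xi).
Local Notation B := (binormal xi).
Local Notation tau := (torsion xi).
Local Notation r := (radius xi).
Local Notation rho := (fun s => Derive (radius xi) s / torsion xi s).
Local Notation sigma := (sigma_fn xi).
Local Notation E := (evolute xi).

Lemma vsmooth_tangent : vsmooth_in a b T.
Proof. exact (vsmooth_in_vderive a b xi xi_smooth). Qed.

Lemma vsmooth_acceleration : vsmooth_in a b (vderive T).
Proof. exact (vsmooth_in_vderive a b T vsmooth_tangent). Qed.

Lemma dot_tangent_self s : a < s < b -> dot (T s) (T s) = 1.
Proof.
  intros Hs. pose proof (unit_speed s Hs) as H. unfold vnorm in H.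
  rewrite <- (sqrt_sqrt _ (dot_self_ge0 (T s))), H. ring.
Qed.

Lemma dot_tangent_acceleration s : a < s < b -> dot (T s) (vderive T s) = 0.
Proof.
  intros Hs.
  pose proof (vsmooth_in_is_vderive a b T s vsmooth_tangent Hs) as dT.
  pose proof (is_derive_dot _ _ s _ _ dT dT) as H.
  apply (is_derive_const_in a b _ 1) in H; [|exact dot_tangent_self|exact Hs].
  rewrite dot_comm in H. lra.
Qed.

Lemma curvature_sqr s : K s * K s = dot (vderive T s) (vderive T s).
Proof. apply sqrt_sqrt, dot_self_ge0. Qed.

Lemma tangent_derivative s : a < s < b -> vderive T s = vscale (K s) (N s).
Proof.
  intros Hs. pose proof (curvature_gt0 s Hs). unfold normal.
  apply vec_ext; vec_unfold; field; lra.
Qed.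

Lemma frenet_frame s : a < s < b -> orthonormal_frame (T s) (N s) (B s).
Proof.
  intros Hs. pose proof (curvature_gt0 s Hs).
  split; [exact (dot_tangent_self s Hs)|]. split; [|split; [|reflexivity]]; unfold normal.
  - rewrite dot_vscale_l, dot_vscale_r, <- curvature_sqr. field. lra.
  - rewrite dot_vscale_r, (dot_tangent_acceleration s Hs). ring.
Qed.

Lemma smooth_curvature : smooth_in a b K.
Proof.
  change (smooth_in a b (fun s => sqrt (dot (vderive T s) (vderive T s)))).
  apply smooth_in_sqrt.
  - intros s Hs. rewrite <- curvature_sqr. pose proof (curvature_gt0 s Hs). nra.
  - apply smooth_in_dot; exact vsmooth_acceleration.
Qed.

Lemma smooth_radius : smooth_in a b r.
Proof.
  change (smooth_in a b (fun s => / K s)). apply smooth_in_inv; [|exact smooth_curvature].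
  intros s Hs. pose proof (curvature_gt0 s Hs). lra.
Qed.

Lemma vsmooth_normal : vsmooth_in a b N.
Proof.
  change (vsmooth_in a b (fun s => vscale (r s) (vderive T s))).
  exact (vsmooth_in_vscale a b _ _ smooth_radius vsmooth_acceleration).
Qed.

Lemma vsmooth_binormal : vsmooth_in a b B.
Proof.
  change (vsmooth_in a b (fun s => cross (T s) (N s))).
  exact (vsmooth_in_cross a b _ _ vsmooth_tangent vsmooth_normal).
Qed.

Lemma smooth_torsion : smooth_in a b tau.
Proof.
  change (smooth_in a b (fun s => dot (vderive N s) (B s))).
  exact (smooth_in_dot a b _ _ (vsmooth_in_vderive a b _ vsmooth_normal) vsmooth_binormal).
Qed.

Lemma smooth_rho : smooth_in a b rho.
Proof.
  exact (smooth_in_div a b _ _ torsion_neq0 (smooth_in_Derive a b _ smooth_radius) smooth_torsion).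
Qed.

Lemma smooth_sigma : smooth_in a b sigma.
Proof.
  change (smooth_in a b (fun s => r s * tau s + Derive rho s)).
  exact (smooth_in_plus a b _ _ (smooth_in_mult a b _ _ smooth_radius smooth_torsion)
    (smooth_in_Derive a b _ smooth_rho)).
Qed.

Lemma vsmooth_evolute : vsmooth_in a b E.
Proof.
  change (vsmooth_in a b (fun s => vadd (xi s) (vadd (vscale (r s) (N s)) (vscale (rho s) (B s))))).
  apply vsmooth_in_vadd; [exact xi_smooth|]. apply vsmooth_in_vadd.
  - exact (vsmooth_in_vscale a b _ _ smooth_radius vsmooth_normal).
  - exact (vsmooth_in_vscale a b _ _ smooth_rho vsmooth_binormal).
Qed.

Lemma normal_derivative s : a < s < b ->
  vderive N s = vadd (vscale (- K s) (T s)) (vscale (tau s) (B s)).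
Proof.
  intros Hs. pose proof (frenet_frame s Hs) as HF. pose proof HF as [_ [NN _]].
  pose proof (vsmooth_in_is_vderive a b N s vsmooth_normal Hs) as dN.
  pose proof (vsmooth_in_is_vderive a b T s vsmooth_tangent Hs) as dT.
  assert (N'T : dot (vderive N s) (T s) = - K s).
  { pose proof (is_derive_dot _ _ s _ _ dN dT) as H.
    apply (is_derive_const_in a b _ 0) in H; [|intros u Hu | exact Hs].
    - rewrite tangent_derivative, dot_vscale_r, NN in H by exact Hs. lra.
    - rewrite dot_comm. exact (proj1 (proj2 (proj2 (frenet_frame u Hu)))). }
  assert (N'N : dot (vderive N s) (N s) = 0).
  { pose proof (is_derive_dot _ _ s _ _ dN dN) as H.
    apply (is_derive_const_in a b _ 1) in H; [|intros u Hu | exact Hs].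
    - rewrite (dot_comm (N s)) in H. lra.
    - exact (proj1 (proj2 (frenet_frame u Hu))). }
  rewrite (frame_decompose _ _ _ HF (vderive N s)), N'T, N'N. fold (tau s). vec_ring.
Qed.

Lemma binormal_derivative s : a < s < b -> vderive B s = vscale (- tau s) (N s).
Proof.
  intros Hs.
  rewrite (is_vderive_unique B s _ (is_vderive_cross _ _ s _ _
    (vsmooth_in_is_vderive a b T s vsmooth_tangent Hs)
    (vsmooth_in_is_vderive a b N s vsmooth_normal Hs))).
  rewrite tangent_derivative, normal_derivative by exact Hs.
  transitivity (vscale (- tau s) (cross (B s) (T s))); [vec_ring|].
  rewrite (frame_BxT _ _ _ (frenet_frame s Hs)). reflexivity.
Qed.

(* The t- and n-components of e' cancel since r k = 1 and (r'/tau) tau = r'. *)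
Lemma evolute_derivative s : a < s < b -> vderive E s = vscale (sigma s) (B s).
Proof.
  intros Hs. pose proof (curvature_gt0 s Hs). pose proof (torsion_neq0 s Hs).
  rewrite (is_vderive_unique E s _ (is_vderive_vadd _ _ s _ _
    (vsmooth_in_is_vderive a b xi s xi_smooth Hs)
    (is_vderive_vadd _ _ s _ _
      (is_vderive_vscale r N s _ _ (smooth_in_is_derive a b r s smooth_radius Hs)
         (vsmooth_in_is_vderive a b N s vsmooth_normal Hs))
      (is_vderive_vscale rho B s _ _ (smooth_in_is_derive a b rho s smooth_rho Hs)
         (vsmooth_in_is_vderive a b B s vsmooth_binormal Hs))))).
  rewrite normal_derivative, binormal_derivative by exact Hs.
  unfold sigma_fn, radius. apply vec_ext; vec_unfold; field; split; auto; lra.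
Qed.

Lemma evolute_second_derivative s : a < s < b ->
  vderive (vderive E) s = vadd (vscale (Derive sigma s) (B s)) (vscale (- (sigma s * tau s)) (N s)).
Proof.
  intros Hs.
  rewrite (vderive_ext_in a b _ (fun u => vscale (sigma u) (B u)) s evolute_derivative Hs).
  rewrite (is_vderive_unique _ _ _ (is_vderive_vscale sigma B s _ _
    (smooth_in_is_derive a b _ s smooth_sigma Hs)
    (vsmooth_in_is_vderive a b B s vsmooth_binormal Hs))).
  rewrite binormal_derivative by exact Hs. vec_ring.
Qed.

Lemma dot_tangent_evolute_third s : a < s < b ->
  dot (T s) (vderive (vderive (vderive E)) s) = sigma s * tau s * K s.
Proof.
  intros Hs. pose proof (frenet_frame s Hs) as HF.
  pose proof (vsmooth_in_vderive a b _ (vsmooth_in_vderive a b _ vsmooth_evolute)) as HE2.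
  pose proof (is_derive_dot _ _ s _ _ (vsmooth_in_is_vderive a b T s vsmooth_tangent Hs)
    (vsmooth_in_is_vderive a b _ s HE2 Hs)) as H.
  apply (is_derive_const_in a b _ 0) in H; [|intros u Hu | exact Hs].
  - rewrite tangent_derivative, evolute_second_derivative, dot_vscale_l, dot_vadd_r, !dot_vscale_r,
      (frame_NB _ _ _ HF), (proj1 (proj2 HF)) in H by exact Hs.
    lra.
  - destruct (frenet_frame u Hu) as [_ [_ [TN _]]].
    rewrite evolute_second_derivative, dot_vadd_r, !dot_vscale_r, TN by exact Hu.
    rewrite (frame_TB _ _ _ (frenet_frame u Hu)). ring.
Qed.

Lemma cross_evolute_derivatives s : a < s < b ->
  cross (vderive E s) (vderive (vderive E) s) = vscale (sigma s * (sigma s * tau s)) (T s).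
Proof.
  intros Hs. rewrite evolute_derivative, evolute_second_derivative by exact Hs.
  transitivity (vscale (sigma s * (sigma s * tau s)) (cross (N s) (B s))); [vec_ring|].
  rewrite (frame_NxB _ _ _ (frenet_frame s Hs)). reflexivity.
Qed.

Lemma evolute_curvature_speed s : a < s < b ->
  gen_curvature E s * vnorm (vderive E s) = Rabs (tau s).
Proof.
  intros Hs.
  assert (HB : vnorm (B s) = 1) by exact (vnorm_unit _ (frame_BB _ _ _ (frenet_frame s Hs))).
  assert (Hsig : Rabs (sigma s) <> 0) by exact (Rabs_no_R0 _ (sigma_neq0 s Hs)).
  unfold gen_curvature.
  rewrite cross_evolute_derivatives, evolute_derivative, !vnorm_vscale, unit_speed, HB, !Rabs_mult
    by exact Hs.
  field. exact Hsig.
Qed.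

Lemma evolute_torsion_speed s : a < s < b ->
  gen_torsion E s * vnorm (vderive E s) = sgn (sigma s) * K s.
Proof.
  intros Hs. pose proof (sigma_neq0 s Hs). pose proof (torsion_neq0 s Hs).
  assert (HB : vnorm (B s) = 1) by exact (vnorm_unit _ (frame_BB _ _ _ (frenet_frame s Hs))).
  unfold gen_torsion.
  rewrite det3E, cross_evolute_derivatives, dot_vscale_l, dot_tangent_evolute_third, vnorm_vscale,
    unit_speed, evolute_derivative, vnorm_vscale, HB, Rmult_1_r, Rmult_1_r, pow2_abs by exact Hs.
  unfold sgn. destruct (Rlt_dec 0 (sigma s)).
  - rewrite Rabs_right by lra. field. auto.
  - destruct (Rlt_dec (sigma s) 0); [|lra].
    rewrite Rabs_left by lra. field. auto.
Qed.
End Frenet.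

Theorem mainTheorem6 (xi : R -> vec) (a b c d : R) :
  c < a -> a < b -> b < d ->
  smooth_on c d xi ->
  (forall t, a <= t <= b -> vnorm (vderive xi t) = 1) ->
  (forall t, a <= t <= b -> 0 < curvature xi t) ->
  (forall t, a <= t <= b -> torsion xi t <> 0) ->
  (forall t, a <= t <= b -> sigma_fn xi t <> 0) ->
  RInt (fun t => gen_curvature (evolute xi) t * vnorm (vderive (evolute xi) t)) a b
    = RInt (fun t => Rabs (torsion xi t)) a b /\
  RInt (fun t => gen_torsion (evolute xi) t * vnorm (vderive (evolute xi) t)) a b
    = RInt (fun t => sgn (sigma_fn xi t) * curvature xi t) a b.
Proof.
  intros Hca Hab Hbd Hxi Hunit Hk Htau Hsigma.
  assert (Hsmooth : vsmooth_in a b xi)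
    by (apply (vsmooth_in_of_smooth_on xi a b c d); [lra | lra | exact Hxi]).
  assert (Hopen : forall P : R -> Prop, (forall t, a <= t <= b -> P t) -> forall t, a < t < b -> P t)
    by (intros P H t Ht; apply H; lra).
  split; apply RInt_ext; rewrite Rmin_left, Rmax_right by lra; intros t Ht.
  - apply (evolute_curvature_speed xi a b); try apply Hopen; assumption.
  - apply (evolute_torsion_speed xi a b); try apply Hopen; assumption.
Qed.
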